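(* Let $A$ be an $n\times n$ real symmetric matrix, let $\alpha \subseteq \{1,\dots,n\}$ be a set of P-vertices of $A$, and let $\beta \subseteq \{1,\dots,n\}$ be such that $\alpha \subseteq \beta$ and the rows of $A$ indexed by $\beta$ form a basis of the row space of $A$. If $\alpha$ is a P-set of the principal submatrix $A[\beta]$ (with indices of $\alpha$ understood as indices of $A[\beta]$), then $\alpha$ is a P-set of $A$.
   Context: All matrices are real. $A[\beta]$ denotes the principal submatrix of $A$ with rows and columns indexed by $\beta$. For an $n\times n$ matrix $A$ and $\alpha \subseteq \{1,\dots,n\}$, $A(\alpha)$ denotes the principal submatrix obtained by deleting the rows and columns indexed by $\alpha$, and $\nu(A)$ denotes the nullity of $A$. Index $i$ is a P-vertex of $A$ if $\nu(A(\{i\})) = \nu(A)+1$. A set $\alpha$ is a P-set of $A$ if $\nu(A(\alpha)) = \nu(A) + |\alpha|$. *)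

From HB Require Import structures.
From mathcomp Require Import all_boot all_order all_algebra.
Set Implicit Arguments. Unset Strict Implicit. Unset Printing Implicit Defensive.
Import GRing.Theory Num.Theory.
Local Open Scope ring_scope.

(* Principal submatrix A[S] of a square matrix, rows/cols indexed by S
   (in increasing order, via enum_val). *)
Definition psub (R : Type) (n : nat) (A : 'M[R]_n) (S : {set 'I_n}) : 'M[R]_#|S| :=
  mxsub (@enum_val _ (mem S)) (@enum_val _ (mem S)) A.

Definition pdel (R : Type) (n : nat) (A : 'M[R]_n) (alpha : {set 'I_n}) :=
  psub A (~: alpha).

Definition nullity (F : fieldType) (m : nat) (A : 'M[F]_m) : nat := (m - \rank A)%N.

Definition P_vertex (F : fieldType) (n : nat) (A : 'M[F]_n) (i : 'I_n) : Prop :=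
  nullity (pdel A [set i]) = (nullity A + 1)%N.

Definition P_set (F : fieldType) (n : nat) (A : 'M[F]_n) (alpha : {set 'I_n}) : Prop :=
  nullity (pdel A alpha) = (nullity A + #|alpha|)%N.

Definition rows_basis (F : fieldType) (m n : nat) (A : 'M[F]_(m, n)) (beta : {set 'I_m}) : Prop :=
  row_free (rowsub (@enum_val _ (mem beta)) A) /\
  (rowsub (@enum_val _ (mem beta)) A == A)%MS.

Definition idx_in_sub (n : nat) (beta alpha : {set 'I_n}) : {set 'I_#|beta|} :=
  [set k : 'I_#|beta| | enum_val k \in alpha].
Arguments psub {R n} A S.
Arguments pdel {R n} A alpha.
Arguments nullity {F m} A.
Arguments P_vertex {F n} A i.
Arguments P_set {F n} A alpha.
Arguments rows_basis {F m n} A beta.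
Arguments idx_in_sub {n} beta alpha.

(* The rows of [A] outside [alpha] span the same space as the rows indexed by
   [beta :\: alpha]: expanding such a row in the basis indexed by [beta], a
   nonzero coefficient on some [i \in alpha] would put row [i] in the span of
   the other rows, which a P-vertex forbids.  For a symmetric matrix, rows
   spanning the same space cut out principal submatrices of equal rank, so
   rank A(alpha) = rank A[beta :\: alpha], and the P-set condition in A[beta]
   transfers to A by counting. *)

From HB Require Import structures.
From mathcomp Require Import all_boot all_order all_algebra.
From mathcomp Require Import zify.
Import GRing.Theory Num.Theory.
Local Open Scope ring_scope.

Set Implicit Arguments.
Unset Strict Implicit.
Unset Printing Implicit Defensive.

Local Notation rowset A S := (rowsub (@enum_val _ (mem S)) A).

Lemma codom_enum_val (T : finType) (S : {set T}) :
  codom (@enum_val _ (mem S)) =i S.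
Proof.
move=> x; apply/codomP/idP => [[k ->]|Sx]; first exact: enum_valP.
by exists (enum_rank_in Sx x); rewrite enum_rankK_in.
Qed.

Section RowSpaces.
Variable F : fieldType.

Lemma submx_rowsub_codom m p q n (f : 'I_p -> 'I_m) (g : 'I_q -> 'I_m)
    (A : 'M[F]_(m, n)) :
  {subset codom f <= codom g} -> (rowsub f A <= rowsub g A)%MS.
Proof.
move=> fg; apply/row_subP => k; rewrite row_rowsub.
have /codomP [k' ->] := fg _ (codom_f f k).
by rewrite -row_rowsub row_sub.
Qed.

Lemma eqmx_rowsub_codom m p q n (f : 'I_p -> 'I_m) (g : 'I_q -> 'I_m)
    (A : 'M[F]_(m, n)) :
  codom f =i codom g -> (rowsub f A == rowsub g A)%MS.
Proof.
by move=> fg; rewrite !submx_rowsub_codom // => x; rewrite fg.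
Qed.

Lemma row_sub_rowset m n (A : 'M[F]_(m, n)) (S : {set 'I_m}) x :
  x \in S -> (row x A <= rowset A S)%MS.
Proof.
move=> Sx; rewrite -(enum_rankK_in Sx Sx) -row_rowsub; exact: row_sub.
Qed.

Lemma coef_eq0_row_notin m r n (B : 'M[F]_(r, n)) (E : 'M[F]_(m, n))
    (c : 'rV_r) k :
  (c *m B <= E)%MS -> (forall k', k' != k -> (row k' B <= E)%MS) ->
  ~~ (row k B <= E)%MS -> c 0 k = 0.
Proof.
move=> cBE rowsE; apply: contraNeq => ck0.
have -> : row k B = (c 0 k)^-1 *: (c *m B - \sum_(k' | k' != k) c 0 k' *: row k' B).
  by rewrite mulmx_sum_row (bigD1 k) //= addrK scalerA mulVf // scale1r.
apply/scalemx_sub/addmx_sub => //; rewrite raddf_sum /=.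
by apply: summx_sub => k' k'k; rewrite -scaleNr scalemx_sub // rowsE.
Qed.

Lemma rowset_compl_eqmx m n (A : 'M[F]_(m, n)) (alpha beta : {set 'I_m}) :
  (A <= rowset A beta)%MS ->
  (forall i, i \in alpha -> ~~ (row i A <= rowset A (~: [set i]))%MS) ->
  (rowset A (~: alpha) == rowset A (beta :\: alpha)%SET)%MS.
Proof.
move=> A_beta alpha_free; apply/andP; split; last first.
  apply: submx_rowsub_codom => x; rewrite !codom_enum_val !inE.
  by case/andP.
apply/row_subP => k; rewrite row_rowsub.
set j := enum_val k; have : j \in ~: alpha by apply: enum_valP.
rewrite inE => j_alpha.
have /submxP [c jE] : (row j A <= rowset A beta)%MS.
  exact: submx_trans (row_sub j A) A_beta.
rewrite jE mulmx_sum_row; apply: summx_sub => k1 _; set i := enum_val k1.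
have [i_alpha | i_alpha] := boolP (i \in alpha); last first.
  by rewrite scalemx_sub // row_rowsub row_sub_rowset // inE i_alpha enum_valP.
suff -> : c 0 k1 = 0 by rewrite scale0r sub0mx.
apply: (coef_eq0_row_notin (B := rowset A beta) (E := rowset A (~: [set i])))
  => [|k' k'k1|].
- by rewrite -jE row_sub_rowset // !inE; apply: contraNneq j_alpha => ->.
- rewrite row_rowsub row_sub_rowset // !inE.
  by apply: contra k'k1 => /eqP/enum_val_inj ->.
- by rewrite row_rowsub alpha_free.
Qed.
End RowSpaces.

Lemma mxrank_rows_basis (F : fieldType) m n (A : 'M[F]_(m, n))
    (beta : {set 'I_m}) :
  rows_basis A beta -> \rank A = #|beta|.
Proof. by case=> /eqnP free /eqmxP eqA; rewrite -eqA free. Qed.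

Section IndicesInSubmatrix.
Variables (n : nat) (alpha beta : {set 'I_n}).

Lemma codom_idx_in_sub_compl :
  codom (@enum_val _ (mem beta) \o @enum_val _ (mem (~: idx_in_sub beta alpha)))
  =i beta :\: alpha.
Proof.
move=> x; apply/codomP/idP => [[k ->] | ].
  have := enum_valP k; rewrite !inE /= => ->; exact: enum_valP.
rewrite inE => /andP [x_alpha x_beta].
have [k1 xE] : exists k1, x = @enum_val _ (mem beta) k1.
  by apply/codomP; rewrite codom_enum_val.
have [k2 k1E] : exists k2, k1 = @enum_val _ (mem (~: idx_in_sub beta alpha)) k2.
  by apply/codomP; rewrite codom_enum_val !inE -xE.
by exists k2; rewrite /= -k1E.
Qed.

Lemma card_idx_in_sub : alpha \subset beta -> #|idx_in_sub beta alpha| = #|alpha|.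
Proof.
move=> alpha_beta; rewrite -(card_imset _ enum_val_inj).
congr #|pred_of_set _|; apply/setP => x; apply/imsetP/idP => [[k] | x_alpha].
  by rewrite inE => ? ->.
have x_beta := subsetP alpha_beta x x_alpha.
by exists (enum_rank_in x_beta x); rewrite ?inE enum_rankK_in.
Qed.

End IndicesInSubmatrix.

Section SymmetricPrincipalRank.
Variables (F : fieldType) (n : nat) (A : 'M[F]_n).
Hypothesis symA : A^T = A.

(* Writing the rows of [f] as [Z *m rowsub g A], symmetry turns the columns into
   [.. *m Z^T] as well, so [mxsub f f A = Z *m mxsub g g A *m Z^T]. *)
Lemma mxrank_mxsub_le p q (f : 'I_p -> 'I_n) (g : 'I_q -> 'I_n) :
  (rowsub f A <= rowsub g A)%MS ->
  (\rank (mxsub f f A) <= \rank (mxsub g g A))%N.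
Proof.
move=> /submxP [Z fZ].
have colsE h : mxsub h f A = (mxsub f h A)^T by rewrite trmx_mxsub symA.
have fgE : mxsub f g A = Z *m mxsub g g A.
  by rewrite mxsubcr fZ -mulmx_colsub -mxsubcr.
have -> : mxsub f f A = Z *m (mxsub g g A *m Z^T).
  by rewrite mxsubcr fZ -mulmx_colsub -mxsubcr colsE fgE trmx_mul trmx_mxsub symA.
exact: leq_trans (mxrankM_maxr _ _) (mxrankM_maxl _ _).
Qed.

Lemma mxrank_mxsub_eq p q (f : 'I_p -> 'I_n) (g : 'I_q -> 'I_n) :
  (rowsub f A == rowsub g A)%MS -> \rank (mxsub f f A) = \rank (mxsub g g A).
Proof.
by case/andP=> fg gf; apply/eqP; rewrite eqn_leq !mxrank_mxsub_le.
Qed.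

(* Otherwise [A(i)] would have the rank of [A], whereas a P-vertex drops it by 2. *)
Lemma P_vertex_row_notin i :
  P_vertex A i -> ~~ (row i A <= rowset A (~: [set i]))%MS.
Proof.
move=> Pi; apply/negP => i_others.
have A_others : (rowsub id A <= rowset A (~: [set i]))%MS.
  apply/row_subP => j; rewrite row_rowsub.
  by have [-> // | ji] := eqVneq j i; rewrite row_sub_rowset // !inE ji.
have : (\rank A <= \rank (pdel A [set i]))%N.
  by rewrite -{1}(mxsub_id A); exact: mxrank_mxsub_le.
move: Pi; rewrite /P_vertex /nullity; move: (\rank (pdel A [set i]) : nat) => r.
rewrite cardsC1 card_ord; have := rank_leq_row A; lia.
Qed.

Lemma mxrank_psub_rows_basis (beta : {set 'I_n}) :
  rows_basis A beta -> \rank (psub A beta) = #|beta|.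
Proof.
move=> basis; have rankA := mxrank_rows_basis basis.
have A_beta : (rowsub id A <= rowset A beta)%MS.
  by rewrite mxsub_id; case: basis => _ /andP [].
apply/eqP; rewrite eqn_leq rank_leq_row /=.
by have := mxrank_mxsub_le A_beta; rewrite mxsub_id rankA.
Qed.

Lemma mxrank_pdel_psub (alpha beta : {set 'I_n}) :
  (forall i, i \in alpha -> P_vertex A i) -> (A <= rowset A beta)%MS ->
  \rank (pdel A alpha) = \rank (pdel (psub A beta) (idx_in_sub beta alpha)).
Proof.
move=> Pverts A_beta; rewrite /pdel /psub -mxsub_comp; apply: mxrank_mxsub_eq.
have /eqmxP compl := rowset_compl_eqmx A_beta
  (fun i alpha_i => P_vertex_row_notin (Pverts i alpha_i)).
have /eqmxP codomE : (rowset A (beta :\: alpha)%SET ==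
    rowsub (enum_val \o @enum_val _ (mem (~: idx_in_sub beta alpha))) A)%MS.
  by apply: eqmx_rowsub_codom => x; rewrite codom_idx_in_sub_compl codom_enum_val.
exact/eqmxP/(eqmx_trans compl codomE).
Qed.

End SymmetricPrincipalRank.

Theorem corollary2p3 (R : realFieldType) (n : nat) (A : 'M[R]_n)
  (alpha beta : {set 'I_n}) :
  A^T = A ->
  (forall i, i \in alpha -> P_vertex A i) ->
  alpha \subset beta ->
  rows_basis A beta ->
  P_set (psub A beta) (idx_in_sub beta alpha) ->
  P_set A alpha.
Proof.
move=> symA Pverts alpha_beta basis.
have A_beta : (A <= rowset A beta)%MS by case: basis => _ /andP [].
rewrite /P_set /nullity (mxrank_psub_rows_basis symA basis).
rewrite (mxrank_pdel_psub symA Pverts A_beta) (mxrank_rows_basis basis).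
have := rank_leq_row (pdel (psub A beta) (idx_in_sub beta alpha)).
move: (\rank (pdel _ _) : nat) => r.
have := cardsC (idx_in_sub beta alpha); rewrite card_ord card_idx_in_sub //.
have := cardsC alpha; rewrite card_ord.
have := subset_leq_card alpha_beta.
have := rank_leq_row A; rewrite (mxrank_rows_basis basis).
lia.
Qed.
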